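(* Let $G=(V,E)$ and $G'=(V,E')$ be graphs and $\lambda>0$. Suppose every pair in $E\setminus E'$ is $(\ell,d)$ connected in $G'$ and every pair in $E'\setminus E$ is $(\ell,d)$ connected in $G$. Then $$D(f_G\|f_{G'})\;\le\;\frac{2\lambda\,|E\,\Delta\,E'|}{1+\dfrac{(1+(\tanh\lambda)^{\ell})^{d}}{(1-(\tanh\lambda)^{\ell})^{d}}}.$$
   Context: For a graph $G=(V,E)$ and $\lambda>0$, $f_G(\mathbf{x})=\frac{1}{Z}\exp\big(\sum_{(i,j)\in E}\lambda x_ix_j\big)$ on $\{-1,+1\}^V$. $D(f\|g)=\sum_x f(x)\log(f(x)/g(x))$ is the KL-divergence; $E\Delta E'$ is the symmetric difference. Two nodes are $(\ell,d)$ connected if there are $d$ node-disjoint paths between them, each of length at most $\ell$. *)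

From HB Require Import structures.
From mathcomp Require Import all_boot all_order all_algebra.
From mathcomp Require Import all_classical all_reals all_analysis.
Set Implicit Arguments. Unset Strict Implicit. Unset Printing Implicit Defensive.
Import Order.TTheory GRing.Theory Num.Theory.
Local Open Scope ring_scope.

Definition simple_graph (V : finType) (E : {set {set V}}) : Prop :=
  forall e, e \in E -> #|e| = 2%N.

Definition adj (V : finType) (E : {set {set V}}) : rel V :=
  fun u v => (u != v) && ([set u; v] \in E).

Definition spin (R : realType) (b : bool) : R := if b then 1 else -1.

Definition ising_weight (R : realType) (V : finType) (E : {set {set V}})
  (lam : R) (x : {ffun V -> bool}) : R :=
  expR (\sum_(e in E) lam * \prod_(i in e) spin R (x i)).

Definition partition_fn (R : realType) (V : finType) (E : {set {set V}})
  (lam : R) : R := \sum_(x : {ffun V -> bool}) ising_weight E lam x.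

Definition ising (R : realType) (V : finType) (E : {set {set V}}) (lam : R)
  (x : {ffun V -> bool}) : R := ising_weight E lam x / partition_fn E lam.

Definition KL (R : realType) (V : finType) (f g : {ffun V -> bool} -> R) : R :=
  \sum_(x : {ffun V -> bool}) f x * ln (f x / g x).

Definition tanh (R : realType) (x : R) : R :=
  (expR x - expR (- x)) / (expR x + expR (- x)).

(* Its length (number of edges) is size p. *)
Definition is_path (V : finType) (E : {set {set V}}) (u v : V) (p : seq V) : bool :=
  [&& path (adj E) u p, last u p == v & uniq (u :: p)].

Definition interior (V : finType) (u v : V) (p : seq V) : seq V :=
  [seq x <- p | (x != u) && (x != v)].

Definition ld_connected (V : finType) (E : {set {set V}}) (l d : nat) (u v : V) : Prop :=
  exists P : 'I_d -> seq V,
    [/\ forall k, is_path E u v (P k),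
        forall k, (size (P k) <= l)%N,
        injective P &
        forall k k', k != k' -> forall x, x \in interior u v (P k) -> x \notin interior u v (P k')].

Definition symdiff (V : finType) (E E' : {set {set V}}) : {set {set V}} :=
  (E :\: E') :|: (E' :\: E).

(* Up to a constant, ln (f_G / f_G') is the energy difference
   lam * (sum_{e in E \ E'} x_e - sum_{e in E' \ E} x_e), so Gibbs' inequality
   bounds D(f_G || f_G') by lam times the sum, over the edges e in the symmetric
   difference, of the gap between the correlations <x_e> in the two models.
   The correlation in the graph containing e is at most 1.  In the other graph
   the endpoints u, v of e are joined by d internally disjoint paths of length
   at most l; by Griffiths' second inequality, deleting every other edge can
   only decrease <x_u x_v>.  On the union of the paths, summing out the interior
   spins turns each path into a single bond of strength tanh(lam)^len >= t,
   where t := tanh(lam)^l, and d parallel bonds of strength at least t force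
   <x_u x_v> >= 1 - 2 / (1 + (1 + t)^d / (1 - t)^d). *)

From Pilot Require Import Defs.
From HB Require Import structures.
From mathcomp Require Import all_boot all_order all_algebra.
From mathcomp Require Import all_classical all_reals all_analysis.
From mathcomp Require Import ring lra.
Import Order.TTheory GRing.Theory Num.Theory.
Local Open Scope ring_scope.
Set Implicit Arguments. Unset Strict Implicit. Unset Printing Implicit Defensive.

Lemma uniq_flatten_map (I T : eqType) (r : seq I) (f : I -> seq T) :
  uniq r -> (forall i, uniq (f i)) ->
  (forall i j, i \in r -> j \in r -> i != j -> forall a, a \in f i -> a \notin f j) ->
  uniq (flatten (map f r)).
Proof.
elim: r => [|i r IHr] //= /andP[i_r r_uniq] f_uniq f_disj.
rewrite cat_uniq f_uniq IHr //=; last first.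
  by move=> j k j_r k_r; apply: f_disj; rewrite inE ?j_r ?k_r orbT.
rewrite andbT; apply/hasPn => a /flattenP[_ /mapP[j j_r ->] a_j].
apply: (f_disj j i); rewrite ?inE ?j_r ?eqxx ?orbT //.
by apply: contraNneq i_r => <-.
Qed.

Section IsingModel.
Variables (R : realType) (V : finType).
Local Notation cfg := {ffun V -> bool}.
Implicit Types (E S : {set {set V}}) (A e : {set V}) (x y z : cfg) (lam c t : R).
Implicit Types (u v w : V) (p q : seq V).

(** * Spin configurations *)

Definition spin_at (x : cfg) (i : V) : R := spin R (x i).

Definition spins (A : {set V}) (x : cfg) : R := \prod_(i in A) spin_at x i.

Lemma spin_sqr b : spin R b * spin R b = 1.
Proof. by case: b; rewrite /= ?(mulr1, mulrNN). Qed.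

Lemma spinN b : spin R (~~ b) = - spin R b.
Proof. by case: b; rewrite /= ?opprK. Qed.

Lemma spin_eq a b : spin R (a == b) = spin R a * spin R b.
Proof. by case: a; case: b; rewrite /= ?(mul1r, mulr1, mulrNN). Qed.

Lemma spin_at_sqr x i : spin_at x i * spin_at x i = 1.
Proof. exact: spin_sqr. Qed.

Lemma spins_sqr A x : spins A x * spins A x = 1.
Proof. by rewrite /spins -big_split; apply: big1 => i _; exact: spin_at_sqr. Qed.

Lemma spins_pm1 A x : spins A x = 1 \/ spins A x = -1.
Proof.
by have /eqP := spins_sqr A x; rewrite -expr2 sqrf_eq1 => /orP[]/eqP; [left|right].
Qed.

Lemma spins_le1 A x : spins A x <= 1.
Proof. by case: (spins_pm1 A x) => ->; lra. Qed.

Lemma spins_ge_N1 A x : -1 <= spins A x.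
Proof. by case: (spins_pm1 A x) => ->; lra. Qed.

Lemma spins_pair a b x : a != b -> spins [set a; b] x = spin_at x a * spin_at x b.
Proof.
move=> ab; rewrite /spins (big_setD1 a) ?inE ?eqxx //=.
rewrite (big_setD1 b) ?inE ?eqxx ?orbT ?andbT 1?eq_sym //=.
by rewrite big_pred0 ?mulr1 // => i; rewrite !inE; case: (i == b); case: (i == a).
Qed.

Lemma spin_at_pair_pm1 a b x : a != b ->
  spin_at x a * spin_at x b = 1 \/ spin_at x a * spin_at x b = -1.
Proof. by move=> ab; rewrite -spins_pair //; exact: spins_pm1. Qed.

Lemma sum_cfg_gt0 (F : cfg -> R) : (forall x, 0 < F x) -> 0 < \sum_x F x.
Proof.
move=> F_gt0; rewrite (bigD1 [ffun=> true]) //=.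
by apply: ltr_wpDr (F_gt0 _); apply: sumr_ge0 => x _; apply: ltW.
Qed.

Definition flip (w : V) (x : cfg) : cfg := [ffun i => if i == w then ~~ x i else x i].

Lemma flipK w : involutive (flip w).
Proof.
by move=> x; apply/ffunP => i; rewrite !ffunE; case: (i == w) => //; rewrite negbK.
Qed.

Lemma sum_flip w (F : cfg -> R) : \sum_x F (flip w x) = \sum_x F x.
Proof. by rewrite [RHS](reindex_inj (inv_inj (flipK w))). Qed.

Lemma sum_flip_avg w (F : cfg -> R) : \sum_x F x = \sum_x (F x + F (flip w x)) / 2.
Proof. by rewrite -mulr_suml big_split /= sum_flip; field. Qed.

Lemma spin_at_flip w x : spin_at (flip w x) w = - spin_at x w.
Proof. by rewrite /spin_at ffunE eqxx spinN. Qed.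

Lemma spin_at_flip_neq w x a : a != w -> spin_at (flip w x) a = spin_at x a.
Proof. by move=> aw; rewrite /spin_at ffunE (negbTE aw). Qed.

Definition flip_invariant (w : V) (f : cfg -> R) := forall x, f (flip w x) = f x.

Lemma flip_invariant_prod (T : eqType) w (r : seq T) (F : T -> cfg -> R) :
  (forall i, i \in r -> flip_invariant w (F i)) ->
  flip_invariant w (fun x => \prod_(i <- r) F i x).
Proof.
by move=> F_inv x; rewrite !big_seq; apply: eq_bigr => i /F_inv ->.
Qed.

Definition monomial (m : V -> nat) (x : cfg) : R := \prod_i spin_at x i ^+ m i.

Lemma monomialM m1 m2 x :
  monomial m1 x * monomial m2 x = monomial (fun i => (m1 i + m2 i)%N) x.
Proof. by rewrite /monomial -big_split; apply: eq_bigr => i _; rewrite exprD. Qed.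

Lemma spins_monomial A x : spins A x = monomial (fun i => i \in A : nat) x.
Proof.
by rewrite /spins /monomial big_mkcond; apply: eq_bigr => i _; case: (i \in A).
Qed.

(* Summing over the spins factorizes: each factor is 2 or 0 by parity. *)
Lemma sum_monomial_ge0 m : 0 <= \sum_x monomial m x.
Proof.
rewrite /monomial /spin_at -(bigA_distr_bigA (fun i b => spin R b ^+ m i)).
apply: prodr_ge0 => i _; rewrite big_bool /= expr1n -signr_odd.
by case: (odd (m i)); rewrite ?expr0 ?expr1 ?subrr.
Qed.

Lemma sum_prod_monomial_ge0 (T : Type) (r : seq T) (c d : T -> R) mr m :
  (forall i, 0 <= c i) -> (forall i, 0 <= d i) ->
  0 <= \sum_x (\prod_(i <- r) (c i + d i * monomial (mr i) x)) * monomial m x.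
Proof.
move=> c_ge0 d_ge0; elim: r m => [|a r IHr] m.
  by under eq_bigr do rewrite big_nil mul1r; exact: sum_monomial_ge0.
set P := fun x => \prod_(i <- r) (c i + d i * monomial (mr i) x).
have expand x : (\prod_(i <- a :: r) (c i + d i * monomial (mr i) x)) * monomial m x =
    c a * (P x * monomial m x) + d a * (P x * monomial (fun i => (mr a i + m i)%N) x).
  by rewrite big_cons -monomialM /P; ring.
under eq_bigr do rewrite expand.
rewrite big_split /= -!mulr_sumr.
by apply: addr_ge0; apply: mulr_ge0 => //; exact: IHr.
Qed.

(** * Correlations and Griffiths' inequality *)

Definition cosh (a : R) := (expR a + expR (- a)) / 2.
Definition sinh (a : R) := (expR a - expR (- a)) / 2.

Lemma expR_spin (a s : R) : s = 1 \/ s = -1 -> expR (a * s) = cosh a + sinh a * s.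
Proof. by move=> [] ->; rewrite /cosh /sinh ?mulr1 ?mulrN1; field. Qed.

Lemma cosh_gt0 a : 0 < cosh a.
Proof. by apply: divr_gt0 => //; apply: addr_gt0; exact: expR_gt0. Qed.

Lemma sinh_ge0 a : 0 <= a -> 0 <= sinh a.
Proof. by move=> a_ge0; apply: divr_ge0 => //; rewrite subr_ge0 ler_expR; lra. Qed.

Lemma tanh_ge0 lam : 0 <= lam -> 0 <= tanh lam.
Proof.
move=> lam_ge0; apply: divr_ge0; last by apply: addr_ge0; exact: expR_ge0.
by rewrite subr_ge0 ler_expR; lra.
Qed.

Lemma tanh_le1 lam : tanh lam <= 1.
Proof.
have := expR_gt0 lam; have := expR_gt0 (- lam) => e1 e2.
by rewrite /tanh ler_pdivrMr; lra.
Qed.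

Lemma expR_tanh lam s : s = 1 \/ s = -1 -> expR (lam * s) = cosh lam * (1 + tanh lam * s).
Proof.
move=> s_pm1; rewrite expR_spin // /cosh /sinh /tanh.
by have := expR_gt0 lam; have := expR_gt0 (- lam) => e1 e2; field; lra.
Qed.

Lemma ising_weightE E lam x :
  ising_weight E lam x = expR (\sum_(e in E) lam * spins e x).
Proof. by []. Qed.

Lemma partition_fn_gt0 E lam : 0 < partition_fn E lam.
Proof. by apply: sum_cfg_gt0 => x; exact: expR_gt0. Qed.

Definition ising_corr (E : {set {set V}}) (lam : R) (A : {set V}) : R :=
  \sum_x ising E lam x * spins A x.

Lemma ising_corrE E lam A :
  ising_corr E lam A = (\sum_x ising_weight E lam x * spins A x) / partition_fn E lam.
Proof. by rewrite mulr_suml; apply: eq_bigr => x _; rewrite mulrAC. Qed.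

Lemma ising_corr_le1 E lam A : ising_corr E lam A <= 1.
Proof.
rewrite ising_corrE ler_pdivrMr ?partition_fn_gt0 // mul1r.
by apply: ler_sum => x _; apply: ler_piMr (spins_le1 _ _); exact: ltW (expR_gt0 _).
Qed.

Definition cfg_mul (x z : cfg) : cfg := [ffun i => x i == z i].

Lemma cfg_mul_inj x : injective (cfg_mul x).
Proof.
move=> z1 z2 /ffunP z12; apply/ffunP => i; move: (z12 i); rewrite !ffunE.
by case: (x i); case: (z1 i); case: (z2 i).
Qed.

Lemma spins_cfg_mul A x z : spins A (cfg_mul x z) = spins A x * spins A z.
Proof. by rewrite /spins -big_split; apply: eq_bigr => i _; rewrite /spin_at ffunE spin_eq. Qed.

(* In the product of the weights of [E] at [x] and of [S] at [x z], every edge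
   contributes [expR (a e * spins e x)] with a nonnegative coupling [a e]. *)
Lemma ising_weight_cfg_mul E S lam x z : S \subset E ->
  let a e := lam + (if e \in S then lam * spins e z else 0) in
  ising_weight E lam x * ising_weight S lam (cfg_mul x z) =
  \prod_(e <- enum E) (cosh (a e) + sinh (a e) * spins e x).
Proof.
move=> SE a; rewrite !ising_weightE -expRD big_enum /=.
have -> : \sum_(e in S) lam * spins e (cfg_mul x z) =
          \sum_(e in E) (if e \in S then spins e x * (lam * spins e z) else 0).
  rewrite -big_mkcondr /=; apply: eq_big => [e|e _].
    by apply/idP/andP => [eS|[]//]; split=> //; exact: (fintype.subsetP SE).
  by rewrite spins_cfg_mul; ring.
rewrite -big_split /= expR_sum; apply: eq_bigr => e _.
rewrite -expR_spin; last exact: spins_pm1.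
by congr expR; rewrite /a; case: (e \in S); ring.
Qed.

(* Griffiths' second inequality, via Ginibre's substitution y = x z. *)
Lemma griffiths_cross E S lam A : 0 <= lam -> S \subset E ->
  (\sum_x ising_weight E lam x) * (\sum_y ising_weight S lam y * spins A y) <=
  (\sum_x ising_weight E lam x * spins A x) * (\sum_y ising_weight S lam y).
Proof.
move=> lam_ge0 SE; rewrite -subr_ge0.
set wE := ising_weight E lam; set wS := ising_weight S lam.
have -> : (\sum_x wE x * spins A x) * (\sum_y wS y) - (\sum_x wE x) * (\sum_y wS y * spins A y) =
    \sum_x \sum_z wE x * wS (cfg_mul x z) * (spins A x - spins A (cfg_mul x z)).
  rewrite !mulr_suml -sumrB; apply: eq_bigr => x _.
  rewrite !mulr_sumr -sumrB (reindex_inj (@cfg_mul_inj x)) /=.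
  by apply: eq_bigr => y _; ring.
rewrite exchange_big /=; apply: sumr_ge0 => z _.
set a := fun e => lam + (if e \in S then lam * spins e z else 0).
have a_ge0 e : 0 <= a e.
  by rewrite /a; case: (e \in S); rewrite ?addr0 //; have := spins_ge_N1 e z; nra.
have -> : \sum_x wE x * wS (cfg_mul x z) * (spins A x - spins A (cfg_mul x z)) =
    (1 - spins A z) * \sum_x (\prod_(e <- enum E) (cosh (a e) +
      sinh (a e) * monomial (fun i => i \in e : nat) x)) * monomial (fun i => i \in A : nat) x.
  rewrite mulr_sumr; apply: eq_bigr => x _.
  rewrite ising_weight_cfg_mul // spins_cfg_mul -spins_monomial.
  under [in RHS]eq_bigr do rewrite -spins_monomial.
  by ring.
apply: mulr_ge0; first by have := spins_le1 A z; lra.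
by apply: sum_prod_monomial_ge0 => e; [exact: ltW (cosh_gt0 _)|exact: sinh_ge0].
Qed.

Lemma ising_corr_subgraph E S lam A : 0 <= lam -> S \subset E ->
  ising_corr S lam A <= ising_corr E lam A.
Proof.
move=> lam_ge0 SE; rewrite !ising_corrE.
rewrite ler_pdivrMr ?partition_fn_gt0 // mulrAC ler_pdivlMr ?partition_fn_gt0 //.
by rewrite mulrC; exact: griffiths_cross.
Qed.

(** * Chains and parallel bonds *)

Lemma sum_decimate w a b c t (G : cfg -> R) : a != w -> b != w -> flip_invariant w G ->
  \sum_x (1 + c * (spin_at x a * spin_at x w)) * (1 + t * (spin_at x w * spin_at x b)) * G x =
  \sum_x (1 + c * t * (spin_at x a * spin_at x b)) * G x.
Proof.
move=> aw bw G_inv; rewrite (sum_flip_avg w); apply: eq_bigr => x _.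
rewrite G_inv (spin_at_flip_neq x aw) (spin_at_flip_neq x bw) spin_at_flip.
have s2 := spin_at_sqr x w; set s := spin_at x w in s2 *.
set A := spin_at x a; set B := spin_at x b.
transitivity ((1 + c * t * (A * B) * (s * s)) * G x); first by field.
by rewrite s2 mulr1.
Qed.

Fixpoint chain_weight (c t : R) (a : V) (p : seq V) (x : cfg) : R :=
  if p is b :: p' then (1 + c * (spin_at x a * spin_at x b)) * chain_weight t t b p' x
  else 1.

Lemma flip_invariant_chain w c t a p : w \notin a :: p -> flip_invariant w (chain_weight c t a p).
Proof.
elim: p c a => [|b p IHp] c a //; rewrite !inE !negb_or => /and3P[wa wb wp] x /=.
by rewrite IHp ?inE ?negb_or ?wb // !spin_at_flip_neq // eq_sym.
Qed.

Lemma sum_chain_weight c t a p (F : cfg -> R) : p != [::] -> uniq (a :: p) ->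
  (forall w, w \in p -> w != last a p -> flip_invariant w F) ->
  \sum_x chain_weight c t a p x * F x =
  \sum_x (1 + c * t ^+ (size p).-1 * (spin_at x a * spin_at x (last a p))) * F x.
Proof.
elim: p a c => [|b [|b' q] IHp] a c // _.
  by move=> _ _; apply: eq_bigr => x _; rewrite /= expr0 !mulr1.
move=> /= /andP[]; rewrite !inE !negb_or => /and3P[ab ab' aq].
move=> /andP[/andP[bb' bq] b'q_uniq] F_inv.
have b_notin : b \notin b' :: q by rewrite inE negb_or bb'.
have b_last : b != last b' q by apply: contraNneq b_notin => ->; exact: mem_last.
transitivity (\sum_x chain_weight (c * t) t a (b' :: q) x * F x).
  transitivity (\sum_x (1 + c * (spin_at x a * spin_at x b)) *
      (1 + t * (spin_at x b * spin_at x b')) * (chain_weight t t b' q x * F x)).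
    by apply: eq_bigr => x _; rewrite /= !mulrA.
  rewrite sum_decimate // 1?eq_sym //.
    by apply: eq_bigr => x _; rewrite /= !mulrA.
  move=> x; rewrite flip_invariant_chain ?inE ?negb_or ?bb' // F_inv //.
  by rewrite !inE eqxx.
rewrite IHp //=.
- by apply: eq_bigr => x _; rewrite exprS !mulrA.
- by rewrite inE negb_or ab' aq b'q_uniq.
- by move=> w w_in w_last; apply: F_inv; rewrite // inE w_in orbT.
Qed.

Definition internally_disjoint (v : V) (p q : seq V) : bool :=
  all (fun w => (w == v) || (w \notin q)) p.

Lemma sum_parallel_chains t L u v (h : cfg -> R) :
  (forall p, p \in L -> [&& p != [::], last u p == v & uniq (u :: p)]) ->
  pairwise (internally_disjoint v) L ->
  (forall p, p \in L -> forall w, w \in p -> w != v -> flip_invariant w h) ->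
  \sum_x (\prod_(p <- L) chain_weight t t u p x) * h x =
  \sum_x (\prod_(p <- L) (1 + t ^+ size p * (spin_at x u * spin_at x v))) * h x.
Proof.
elim: L h => [|p L IHL] h L_paths L_disj h_inv.
  by apply: eq_bigr => x _; rewrite !big_nil.
move: L_disj; rewrite pairwise_cons => /andP[/allP p_disj L_disj].
have /and3P[p_nil /eqP p_last p_uniq] := L_paths p (mem_head _ _).
have u_notin q : q \in p :: L -> u \notin q by move/L_paths => /and3P[_ _ /andP[]].
have w_neq_u q w : q \in p :: L -> w \in q -> w != u.
  by move=> /u_notin u_q w_q; apply: contraNneq u_q => <-.
set bond := fun n x => 1 + t ^+ n * (spin_at x u * spin_at x v).
transitivity (\sum_x bond (size p) x * ((\prod_(q <- L) chain_weight t t u q x) * h x)).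
  under eq_bigr do rewrite big_cons -mulrA.
  rewrite sum_chain_weight //; last first.
    move=> w w_p; rewrite p_last => w_v x.
    rewrite (h_inv p (mem_head _ _) w w_p w_v x).
    rewrite (flip_invariant_prod (F := fun q => chain_weight t t u q)) //.
    move=> q q_L; apply: flip_invariant_chain.
    rewrite inE negb_or (w_neq_u p) ?mem_head //=.
    by have := allP (p_disj q q_L) w w_p; rewrite (negbTE w_v).
  rewrite p_last; apply: eq_bigr => x _; rewrite -exprS prednK //.
  by case: (p) p_nil.
transitivity (\sum_x (\prod_(q <- L) chain_weight t t u q x) * (bond (size p) x * h x)).
  by apply: eq_bigr => x _; rewrite mulrCA.
rewrite IHL //.
- by apply: eq_bigr => x _; rewrite big_cons mulrCA mulrA.
- by move=> q q_L; apply: L_paths; rewrite inE q_L orbT.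
move=> q q_L w w_q w_v x; have q_pL : q \in p :: L by rewrite inE q_L orbT.
have w_u : u != w by rewrite eq_sym (w_neq_u q).
by rewrite /bond (h_inv q q_pL w w_q w_v x) !spin_at_flip_neq // eq_sym.
Qed.

Lemma prod_bonds_ratio_le (I : finType) (a : I -> R) s : 0 <= s <= 1 ->
  (forall i, s <= a i <= 1) ->
  (\prod_i (1 - a i)) * ((1 + s) ^+ #|I| / (1 - s) ^+ #|I|) <= \prod_i (1 + a i).
Proof.
move=> /andP[s_ge0 s_le1] a_s.
have [->|D_neq0] := eqVneq ((1 - s) ^+ #|I|) 0.
  by rewrite invr0 !mulr0; apply: prodr_ge0 => i _; have := a_s i; lra.
have D_gt0 : 0 < (1 - s) ^+ #|I|.
  by rewrite lt_def D_neq0 exprn_ge0 //; lra.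
rewrite mulrA ler_pdivrMr // -!prodrMr; apply: ler_prod => i _.
by have := a_s i => a_i; apply/andP; split; nra.
Qed.

(* Flipping [u] exchanges the configurations with [x_u x_v = 1] and [-1]; the
   bound then reduces to the ratio estimate above. *)
Lemma parallel_bonds_corr (I : finType) (a : I -> R) s u v : u != v ->
  0 <= s <= 1 -> (forall i, s <= a i <= 1) ->
  (1 - 2 / (1 + (1 + s) ^+ #|I| / (1 - s) ^+ #|I|)) *
    \sum_x \prod_i (1 + a i * (spin_at x u * spin_at x v)) <=
  \sum_x \prod_i (1 + a i * (spin_at x u * spin_at x v)) * (spin_at x u * spin_at x v).
Proof.
move=> uv s01 a_s.
set rho := (1 + s) ^+ _ / _; set c := 1 - _.
have rho_ge0 : 0 <= rho by apply: divr_ge0; apply: exprn_ge0; case/andP: s01; lra.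
set Pp := \prod_i (1 + a i); set Pm := \prod_i (1 - a i).
have key : 0 <= Pp * (1 - c) - Pm * (1 + c).
  have -> : Pp * (1 - c) - Pm * (1 + c) = 2 / (1 + rho) * (Pp - Pm * rho).
    by rewrite /c; field; lra.
  have := prod_bonds_ratio_le s01 a_s; rewrite -/rho -/Pp -/Pm => ratio.
  by apply: mulr_ge0; [apply: divr_ge0; lra | lra].
rewrite -subr_ge0 mulr_sumr -sumrB (sum_flip_avg u).
apply: sumr_ge0 => x _; apply: divr_ge0 => //.
rewrite (spin_at_flip_neq x (_ : v != u)) 1?eq_sym // spin_at_flip mulNr.
have EPp : \prod_i (1 + a i * 1) = Pp by apply: eq_bigr => i _; rewrite mulr1.
have EPm : \prod_i (1 + a i * - 1) = Pm by apply: eq_bigr => i _; rewrite mulrN1.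
by case: (spin_at_pair_pm1 x uv) => ->; rewrite ?opprK EPp EPm; lra.
Qed.

(** * Paths *)

Fixpoint path_edges (a : V) (p : seq V) : seq {set V} :=
  if p is b :: p' then [set a; b] :: path_edges b p' else [::].

Lemma path_edges_sub E a p : path (adj E) a p -> {subset path_edges a p <= E}.
Proof.
elim: p a => [|b p IHp] a //= /andP[/andP[_ ab_E] p_path] e.
by rewrite inE => /orP[/eqP -> //|]; exact: IHp.
Qed.

Lemma mem_path_edges a p e w : e \in path_edges a p -> w \in e -> w \in a :: p.
Proof.
elim: p a => [|b p IHp] a //=; rewrite inE => /orP[/eqP ->|e_p w_e].
  by rewrite !inE => /orP[] ->; rewrite ?orbT.
by rewrite inE (IHp _ e_p w_e) orbT.
Qed.

Lemma path_edges_uniq a p : uniq (a :: p) -> uniq (path_edges a p).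
Proof.
elim: p a => [|b p IHp] a //= /andP[]; rewrite inE negb_or => /andP[ab a_p] bp_uniq.
rewrite IHp // andbT; apply: contraNN a_p => /mem_path_edges/(_ (set21 a b)).
by rewrite inE (negbTE ab).
Qed.

Lemma card_path_edge a p e : uniq (a :: p) -> e \in path_edges a p -> #|e| = 2%N.
Proof.
elim: p a => [|b p IHp] a //= /andP[]; rewrite inE negb_or => /andP[ab _] bp_uniq.
by rewrite inE => /orP[/eqP ->|]; [rewrite cards2 ab | exact: IHp].
Qed.

Lemma path_edges_direct a v p : uniq (a :: p) -> a != v -> last a p = v ->
  [set a; v] \in path_edges a p -> p = [:: v].
Proof.
case: p => [|b p] //= /andP[]; rewrite inE negb_or => /andP[ab a_p] /andP[b_p _] av p_last.
rewrite inE => /orP[/eqP av_ab|av_p]; last first.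
  have := mem_path_edges av_p (set21 a v).
  by rewrite inE (negbTE ab) (negbTE a_p).
have vb : v = b.
  have : v \in [set a; b] by rewrite -av_ab !inE eqxx orbT.
  by rewrite !inE eq_sym (negbTE av) => /eqP.
case: p {a_p} p_last b_p => [|c p] /= p_last; first by rewrite vb.
by rewrite -vb -p_last mem_last.
Qed.

Lemma path_edges_shared u v p q e : u != v ->
  uniq (u :: p) -> uniq (u :: q) -> last u p = v -> last u q = v ->
  (forall w, w \in Defs.interior u v p -> w \notin Defs.interior u v q) ->
  e \in path_edges u p -> e \in path_edges u q -> p = [:: v] /\ q = [:: v].
Proof.
move=> uv p_uniq q_uniq p_last q_last disj e_p e_q.
have e_uv : e = [set u; v].
  apply/eqP; rewrite eqEcard cards2 uv (card_path_edge p_uniq e_p) leqnn andbT.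
  apply/fintype.subsetP => w w_e; rewrite !inE; apply/negPn/negP; rewrite negb_or => /andP[wu wv].
  have w_p := mem_path_edges e_p w_e; have w_q := mem_path_edges e_q w_e.
  rewrite !inE (negbTE wu) /= in w_p w_q.
  by have := disj w; rewrite !mem_filter wu wv w_p w_q => /(_ isT).
rewrite e_uv in e_p e_q.
by split; [exact: path_edges_direct e_p | exact: path_edges_direct e_q].
Qed.

Lemma prod_path_edges t a p x : uniq (a :: p) ->
  \prod_(e <- path_edges a p) (1 + t * spins e x) = chain_weight t t a p x.
Proof.
elim: p a => [|b p IHp] a; first by rewrite big_nil.
move=> /= /andP[]; rewrite inE negb_or => /andP[ab _] bp_uniq.
by rewrite big_cons IHp // spins_pair.
Qed.

Section PathFamily.
Variables (E : {set {set V}}) (d : nat) (u v : V) (P : 'I_d -> seq V).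
Hypotheses (uv : u != v) (P_path : forall k, is_path E u v (P k)) (P_inj : injective P).
Hypothesis P_disj : forall k k', k != k' ->
  forall w, w \in Defs.interior u v (P k) -> w \notin Defs.interior u v (P k').

Definition path_union_edges := flatten [seq path_edges u (P k) | k <- enum 'I_d].

Definition path_union : {set {set V}} := [set e | e \in path_union_edges].

Lemma path_chain k : [&& P k != [::], last u (P k) == v & uniq (u :: P k)].
Proof.
have /and3P[_ /eqP P_last P_uniq] := P_path k; rewrite P_last eqxx P_uniq !andbT.
by apply: contra_neq uv => P_nil; rewrite -P_last P_nil.
Qed.

Lemma path_union_sub : path_union \subset E.
Proof.
apply/fintype.subsetP => e; rewrite inE => /flattenP[_ /mapP[k _ ->]].
by have /and3P[P_adj _ _] := P_path k; exact: path_edges_sub.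
Qed.

Lemma path_union_edges_uniq : uniq path_union_edges.
Proof.
apply: uniq_flatten_map; first exact: enum_uniq.
  by move=> k; have /and3P[_ _ P_uniq] := path_chain k; exact: path_edges_uniq.
move=> k k' _ _ kk' e e_k.
have /and3P[_ /eqP last_k uniq_k] := path_chain k.
have /and3P[_ /eqP last_k' uniq_k'] := path_chain k'.
apply/negP => e_k'.
have [Pk Pk'] := path_edges_shared uv uniq_k uniq_k' last_k last_k' (P_disj kk') e_k e_k'.
by move: kk'; rewrite (P_inj (etrans Pk (esym Pk'))) eqxx.
Qed.

Lemma paths_internally_disjoint :
  pairwise (internally_disjoint v) [seq P k | k <- enum 'I_d].
Proof.
have := enum_uniq 'I_d; rewrite uniq_pairwise pairwise_map.
apply: sub_pairwise => k k' /= kk'; apply/allP => w w_k.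
have [//|wv /=] := eqVneq w v.
have /and3P[_ _ /andP[u_k _]] := path_chain k.
have wu : w != u by apply: contraNneq u_k => <-.
have : w \in Defs.interior u v (P k) by rewrite mem_filter wu wv.
by move/(P_disj kk'); rewrite mem_filter wu wv.
Qed.

Lemma sum_ising_weight_path_union lam (h : cfg -> R) :
  (forall w, w \notin [:: u; v] -> flip_invariant w h) ->
  \sum_x ising_weight path_union lam x * h x =
  cosh lam ^+ #|path_union| *
  \sum_x (\prod_(k < d) (1 + tanh lam ^+ size (P k) * (spin_at x u * spin_at x v))) * h x.
Proof.
move=> h_inv; set t := tanh lam.
have weightE x : ising_weight path_union lam x =
    cosh lam ^+ #|path_union| * \prod_(p <- [seq P k | k <- enum 'I_d]) chain_weight t t u p x.
  rewrite ising_weightE expR_sum.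
  under eq_bigr do rewrite (expR_tanh _ (spins_pm1 _ _)).
  rewrite prodrMl; congr (_ * _).
  rewrite (eq_bigl (mem path_union_edges)) => [|e]; last by rewrite inE.
  rewrite -(big_uniq _ path_union_edges_uniq) big_flatten /= !big_map.
  apply: eq_bigr => k _.
  by apply: prod_path_edges; have /and3P[_ _ ->] := path_chain k.
under eq_bigr do rewrite weightE -mulrA.
rewrite -mulr_sumr (sum_parallel_chains _ _ (v := v)).
- by under eq_bigr do rewrite big_map big_enum.
- by move=> p /mapP[k _ ->]; exact: path_chain.
- exact: paths_internally_disjoint.
move=> p /mapP[k _ ->] w w_k wv; apply: h_inv.
have /and3P[_ _ /andP[u_k _]] := path_chain k.
by rewrite !inE negb_or wv andbT; apply: contraNneq u_k => <-.
Qed.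

Lemma path_union_corr_ge lam l : 0 < lam -> (forall k, size (P k) <= l)%N ->
  1 - 2 / (1 + (1 + tanh lam ^+ l) ^+ d / (1 - tanh lam ^+ l) ^+ d) <=
  ising_corr path_union lam [set u; v].
Proof.
move=> lam_gt0 P_len; set t := tanh lam.
have t_ge0 : 0 <= t by apply: tanh_ge0; exact: ltW.
have t_le1 : t <= 1 by exact: tanh_le1.
set bonds := fun x => \prod_(k < d) (1 + t ^+ size (P k) * (spin_at x u * spin_at x v)).
set K := cosh lam ^+ #|path_union|.
have K_gt0 : 0 < K by apply: exprn_gt0; exact: cosh_gt0.
have ZE : partition_fn path_union lam = K * \sum_x bonds x.
  transitivity (\sum_x ising_weight path_union lam x * 1).
    by apply: eq_bigr => x _; rewrite mulr1.
  rewrite sum_ising_weight_path_union //.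
  by congr (_ * _); apply: eq_bigr => x _; rewrite mulr1.
have NE : \sum_x ising_weight path_union lam x * spins [set u; v] x =
    K * \sum_x bonds x * (spin_at x u * spin_at x v).
  under eq_bigr do rewrite spins_pair //.
  rewrite sum_ising_weight_path_union // => w; rewrite !inE negb_or => /andP[wu wv] x.
  by rewrite !spin_at_flip_neq // eq_sym.
have bonds_gt0 : 0 < \sum_x bonds x.
  by rewrite -(pmulr_rgt0 _ K_gt0) -ZE partition_fn_gt0.
rewrite ising_corrE NE ZE ler_pdivlMr ?mulr_gt0 // mulrCA ler_pM2l //.
have := @parallel_bonds_corr 'I_d (fun k => t ^+ size (P k)) (t ^+ l) u v uv.
rewrite card_ord; apply.
  by rewrite exprn_ge0 // exprn_ile1.
move=> k; rewrite exprn_ile1 // andbT.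
exact: ler_wiXn2l.
Qed.

End PathFamily.

Lemma ld_connected_corr_ge E lam l d u v : 0 < lam -> u != v -> ld_connected E l d u v ->
  1 - 2 / (1 + (1 + tanh lam ^+ l) ^+ d / (1 - tanh lam ^+ l) ^+ d) <=
  ising_corr E lam [set u; v].
Proof.
move=> lam_gt0 uv [P [P_path P_len P_inj P_disj]].
apply: le_trans (path_union_corr_ge uv P_path P_inj P_disj lam_gt0 P_len) _.
by apply: ising_corr_subgraph; [exact: ltW | exact: path_union_sub].
Qed.

(** * Relative entropy *)

Lemma ising_gt0 E lam x : 0 < ising E lam x.
Proof. by apply: divr_gt0; [exact: expR_gt0 | exact: partition_fn_gt0]. Qed.

Lemma sum_ising E lam : \sum_x ising E lam x = 1.
Proof. by rewrite -mulr_suml divff // gt_eqF ?partition_fn_gt0. Qed.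

Lemma ln_le_subr1 (a : R) : 0 < a -> ln a <= a - 1.
Proof. by move=> a_gt0; have := expR_ge1Dx (ln a); rewrite lnK ?posrE //; lra. Qed.

Lemma KL_le_symmetrized (f g : cfg -> R) :
  (forall x, 0 < f x) -> (forall x, 0 < g x) -> \sum_x f x = 1 -> \sum_x g x = 1 ->
  KL f g <= \sum_x (f x - g x) * ln (f x / g x).
Proof.
move=> f_gt0 g_gt0 f_sum g_sum.
have reverse : \sum_x g x * ln (f x / g x) <= 0.
  apply: (@le_trans _ _ (\sum_x (f x - g x))); last by rewrite sumrB f_sum g_sum subrr.
  apply: ler_sum => x _; have fx := f_gt0 x; have gx := g_gt0 x.
  have -> : f x - g x = g x * (f x / g x - 1) by field; exact: lt0r_neq0.
  by apply: ler_wpM2l; [exact: ltW | exact: ln_le_subr1 (divr_gt0 fx gx)].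
have -> : KL f g = \sum_x (f x - g x) * ln (f x / g x) + \sum_x g x * ln (f x / g x).
  by rewrite /KL -big_split; apply: eq_bigr => x _ /=; ring.
by rewrite -[leRHS]addr0 lerD2l.
Qed.

Lemma ln_ising_ratio E E' lam x :
  ln (ising E lam x / ising E' lam x) =
  \sum_(e in E :\: E') lam * spins e x - \sum_(e in E' :\: E) lam * spins e x +
  (ln (partition_fn E' lam) - ln (partition_fn E lam)).
Proof.
rewrite ln_div ?posrE ?ising_gt0 // !ln_div ?posrE ?expR_gt0 ?partition_fn_gt0 //.
rewrite !ising_weightE !expRK (big_setID E') [X in _ - (X - _) = _](big_setID E) finset.setIC /=.
by ring.
Qed.

Lemma symmetrized_KL_ising E E' lam :
  \sum_x (ising E lam x - ising E' lam x) * ln (ising E lam x / ising E' lam x) =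
  lam * (\sum_(e in E :\: E') (ising_corr E lam e - ising_corr E' lam e) +
         \sum_(e in E' :\: E) (ising_corr E' lam e - ising_corr E lam e)).
Proof.
under eq_bigr do rewrite ln_ising_ratio mulrDr.
rewrite big_split /= -mulr_suml sumrB !sum_ising subrr mul0r addr0.
under eq_bigr do rewrite mulrBr !mulr_sumr.
rewrite sumrB exchange_big [X in _ - X]exchange_big /= mulrDr !mulr_sumr.
rewrite -sumrN /ising_corr; congr (_ + _); apply: eq_bigr => e _.
  by rewrite -sumrB mulr_sumr; apply: eq_bigr => x _; ring.
by rewrite -sumrB mulr_sumr -sumrN; apply: eq_bigr => x _; ring.
Qed.

Lemma KL_ising_le E E' lam : KL (ising E lam) (ising E' lam) <=
  lam * (\sum_(e in E :\: E') (ising_corr E lam e - ising_corr E' lam e) +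
         \sum_(e in E' :\: E) (ising_corr E' lam e - ising_corr E lam e)).
Proof.
rewrite -symmetrized_KL_ising.
by apply: KL_le_symmetrized; [exact: ising_gt0 | exact: ising_gt0 | exact: sum_ising | exact: sum_ising].
Qed.

Lemma sum_corr_gap_le E E' lam l d : 0 < lam -> simple_graph E ->
  (forall u v, u != v -> [set u; v] \in E :\: E' -> ld_connected E' l d u v) ->
  \sum_(e in E :\: E') (ising_corr E lam e - ising_corr E' lam e) <=
  #|E :\: E'|%:R * (2 / (1 + (1 + tanh lam ^+ l) ^+ d / (1 - tanh lam ^+ l) ^+ d)).
Proof.
move=> lam_gt0 E_simple E'_conn; rewrite mulr_natl -sumr_const; apply: ler_sum => e e_E.
have /cards2P[u [v [uv e_uv]]] : #|e| == 2%N.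
  by rewrite E_simple //; move: e_E; rewrite inE => /andP[].
rewrite e_uv in e_E *; have := ising_corr_le1 E lam [set u; v].
by have := ld_connected_corr_ge lam_gt0 uv (E'_conn u v uv e_E); lra.
Qed.

Lemma card_symdiff E E' : #|symdiff E E'| = (#|E :\: E'| + #|E' :\: E|)%N.
Proof.
rewrite -cardsUI (_ : _ :&: _ = finset.set0) ?cards0 ?addn0 //.
by apply/setP => e; rewrite !inE; case: (e \in E); case: (e \in E').
Qed.

End IsingModel.

Theorem corollary3 (R : realType) (V : finType) (E E' : {set {set V}})
  (lam : R) (l d : nat) :
  simple_graph E -> simple_graph E' -> 0 < lam ->
  (forall u v : V, u != v -> [set u; v] \in E :\: E' -> ld_connected E' l d u v) ->
  (forall u v : V, u != v -> [set u; v] \in E' :\: E -> ld_connected E l d u v) ->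
  KL (ising E lam) (ising E' lam) <=
    (2 * lam * #|symdiff E E'|%:R) /
    (1 + (1 + tanh lam ^+ l) ^+ d / (1 - tanh lam ^+ l) ^+ d).
Proof.
move=> E_simple E'_simple lam_gt0 E'_conn E_conn.
have gap := sum_corr_gap_le lam_gt0 E_simple E'_conn.
have gap' := sum_corr_gap_le lam_gt0 E'_simple E_conn.
set rho := (1 + tanh lam ^+ l) ^+ d / _ in gap gap' *.
have rho_ge0 : 0 <= rho.
  have t_ge0 := tanh_ge0 (ltW lam_gt0).
  have := exprn_ile1 l t_ge0 (tanh_le1 lam); have := exprn_ge0 l t_ge0.
  by move=> tl_ge0 tl_le1; apply: divr_ge0; apply: exprn_ge0; lra.
apply: le_trans (KL_ising_le E E' lam) _.
rewrite card_symdiff natrD.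
have -> : 2 * lam * (#|E :\: E'|%:R + #|E' :\: E|%:R) / (1 + rho) =
    lam * (#|E :\: E'|%:R * (2 / (1 + rho)) + #|E' :\: E|%:R * (2 / (1 + rho))).
  by field; lra.
by apply: ler_wpM2l; [exact: ltW | exact: lerD].
Qed.
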